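(* Let $\mathcal{R}$ be any regularizer satisfying Condition 1 with constants $\alpha,\beta>0$. Then for every $\eta$ with $0<\eta<\min(\alpha/2,1/\beta)$, the FTRL mechanism $M_{\mathcal{R},\eta}$ is $(\beta+1)\eta$-approximately truthful.
   Context: Setting: $n$ forecasters, $m$ binary events with outcomes $\vec y\in\{0,1\}^m$; forecaster $i$ has beliefs $p_i\in[0,1]^m$ (believing events independent) and reports $r_i\in[0,1]^m$. A mechanism maps reports $R\in[0,1]^{n\times m}$ and outcomes $\vec y$ to a distribution $M(R,\vec y)\in\Delta_n$ over winners; $M(R;p_i)=\mathbb{E}_{\vec y\sim p_i}M(R,\vec y)$, with $y_t\sim\mathrm{Bernoulli}(p_{it})$ independently. For fixed $p_i$, report $\hat r_i$ strictly dominates $r_i$ if $M(\hat r_i,R_{-i};p_i)_i>M(r_i,R_{-i};p_i)_i$ for all $R_{-i}$; $r_i$ is undominated if no report strictly dominates it. $M$ is $\gamma$-approximately truthful if for all $p_i$: (i) an undominated report exists, and (ii) every undominated report $r_i$ satisfies $\|r_i-p_i\|_\infty\le\gamma$. Quadratic score $S(q,y)=1-(y-q)^2$. A regularizer is a strictly convex differentiable $\mathcal{R}:\Delta_n\to\mathbb{R}$ with conjugate $C(x)=\sup_{\pi\in\Delta_n}(\langle\pi,x\rangle-\mathcal{R}(\pi))$ (assumed differentiable); the FTRL mechanism is $M_{\mathcal{R},\eta}(R,\vec y)=\nabla C(\eta q)$ with $q_j=\sum_tS(r_{jt},y_t)$. Condition 1: $C$ thrice differentiable; (i) $\partial_i^2C(x)\ge\alpha|\partial_i^3C(x)|$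 for all $x,i$; (ii) $|\log(\partial_i^2C(x)/\partial_i^2C(x'))|\le\beta\|x-x'\|_\infty$ for all $x,x',i$. *)

From HB Require Import structures.
From mathcomp Require Import all_boot all_order all_algebra.
From mathcomp Require Import all_classical all_reals all_analysis.
Set Implicit Arguments. Unset Strict Implicit. Unset Printing Implicit Defensive.
Import Order.TTheory GRing.Theory Num.Theory.
Import numFieldNormedType.Exports.
Local Open Scope classical_set_scope.
Local Open Scope ring_scope.

Section Defs.
Variable R : realType.

Definition simplex (n : nat) : set 'rV[R]_n :=
  [set pi | (forall i, 0 <= pi ord0 i) /\ \sum_i pi ord0 i = 1].

Definition simplex_relint (n : nat) : set 'rV[R]_n :=
  [set pi | (forall i, 0 < pi ord0 i) /\ \sum_i pi ord0 i = 1].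

(** Strict convexity of Rg on Delta_n (Rg is only ever evaluated on Delta_n). *)
Definition strictly_convex_on_simplex (n : nat) (Rg : 'rV[R]_n -> R) : Prop :=
  forall p1 p2 : 'rV[R]_n, simplex p1 -> simplex p2 -> p1 <> p2 ->
  forall t : R, 0 < t < 1 ->
    Rg (t *: p1 + (1 - t) *: p2) < t * Rg p1 + (1 - t) * Rg p2.

Definition differentiable_on_simplex (n : nat) (Rg : 'rV[R]_n -> R) : Prop :=
  forall pi : 'rV[R]_n, simplex_relint pi ->
  forall v : 'rV[R]_n, \sum_i v ord0 i = 0 -> derivable Rg pi v.

Definition conjugate (n : nat) (Rg : 'rV[R]_n -> R) (x : 'rV[R]_n) : R :=
  sup [set (\sum_i pi ord0 i * x ord0 i) - Rg pi | pi in @simplex n].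

Definition partial (n : nat) (i : 'I_n) (f : 'rV[R]_n -> R) : 'rV[R]_n -> R :=
  'D_(delta_mx ord0 i) f.

Definition regularizer (n : nat) (Rg : 'rV[R]_n -> R) : Prop :=
  [/\ strictly_convex_on_simplex Rg, differentiable_on_simplex Rg
    & forall x, differentiable (conjugate Rg) x].

Definition thrice_differentiable (n : nat) (C : 'rV[R]_n -> R) : Prop :=
  [/\ forall x, differentiable C x,
      forall i x, differentiable (partial i C) x
    & forall i j x, differentiable (partial j (partial i C)) x].

Definition d2 (n : nat) (i : 'I_n) (C : 'rV[R]_n -> R) := partial i (partial i C).
Definition d3 (n : nat) (i : 'I_n) (C : 'rV[R]_n -> R) :=
  partial i (partial i (partial i C)).

(** Condition 1 (the norm on row vectors is the sup-norm). *)
Definition condition1 (n : nat) (C : 'rV[R]_n -> R) (alpha beta : R) : Prop :=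
  [/\ thrice_differentiable C,
      forall x i, alpha * `|d3 i C x| <= d2 i C x,
      forall x i, 0 < d2 i C x
    & forall x x' i, `|ln (d2 i C x / d2 i C x')| <= beta * `|x - x'|].

Definition outcome (m : nat) := {ffun 'I_m -> bool}.

Definition in_unit_cube (k m : nat) (A : 'M[R]_(k, m)) : Prop :=
  forall j t, 0 <= A j t <= 1.

Definition mechanism (n m : nat) := 'M[R]_(n, m) -> outcome m -> 'rV[R]_n.

Definition outcome_prob (m : nat) (p : 'rV[R]_m) (y : outcome m) : R :=
  \prod_t (if y t then p ord0 t else 1 - p ord0 t).

Definition expected_mech (n m : nat) (M : mechanism n m) (Rep : 'M[R]_(n, m))
  (p : 'rV[R]_m) : 'rV[R]_n :=
  \sum_(y : outcome m) outcome_prob p y *: M Rep y.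

Definition qscore (q : R) (b : bool) : R := 1 - ((b%:R : R) - q) ^+ 2.

Definition ftrl (n m : nat) (C : 'rV[R]_n -> R) (eta : R) : mechanism n m :=
  fun Rep y =>
    \row_j partial j C (eta *: \row_k (\sum_t qscore (Rep k t) (y t))).

Definition replace_row (n m : nat) (i : 'I_n) (r : 'rV[R]_m) (Rep : 'M[R]_(n, m))
  : 'M[R]_(n, m) := \matrix_(k, t) (if k == i then r ord0 t else Rep k t).

Definition strictly_dominates (n m : nat) (M : mechanism n m) (i : 'I_n)
  (p : 'rV[R]_m) (rhat r : 'rV[R]_m) : Prop :=
  forall Rep : 'M[R]_(n, m), in_unit_cube Rep ->
    expected_mech M (replace_row i r Rep) p ord0 i <
    expected_mech M (replace_row i rhat Rep) p ord0 i.

Definition undominated (n m : nat) (M : mechanism n m) (i : 'I_n)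
  (p : 'rV[R]_m) (r : 'rV[R]_m) : Prop :=
  in_unit_cube r /\
  ~ (exists rhat, in_unit_cube rhat /\ strictly_dominates M i p rhat r).

(** gamma-approximate truthfulness (norm on 'rV is the sup-norm). *)
Definition approx_truthful (n m : nat) (M : mechanism n m) (gamma : R) : Prop :=
  forall (i : 'I_n) (p : 'rV[R]_m), in_unit_cube p ->
    (exists r, undominated M i p r) /\
    (forall r, undominated M i p r -> `|r - p| <= gamma).

End Defs.

From HB Require Import structures.
From mathcomp Require Import all_boot all_order all_algebra.
From mathcomp Require Import all_classical all_reals all_analysis.
From mathcomp Require Import ring lra.
Import Order.TTheory GRing.Theory Num.Theory.
Import numFieldNormedType.Exports.
Local Open Scope classical_set_scope.
Local Open Scope ring_scope.

(* Fix forecaster i with belief p and a report r with |r_t - p_t| > (beta+1) eta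
   for some event t.  Moving r_t towards p_t, to the point z' at distance
   (beta+1) eta from p_t, gives a report that strictly dominates r.  Against any
   profile, group the outcomes in pairs {y, flip t y} differing only on event t:
   the winning probability is a convex combination of the pairwise values
   p_t G(z, y) + (1 - p_t) G(z, flip t y), where G(z, .) = d_i C evaluated at the
   FTRL argument, which depends on z only through a shift along eta e_i.  By the
   mean value theorem the pairwise gain is governed by d_i^2 C at two points at
   sup-distance at most eta; Condition 1(ii) bounds their ratio by
   exp(beta eta) <= 1 + 3 beta eta, and an elementary quadratic inequality shows
   that the gain is positive.  Existence of undominated reports follows from the
   extreme value theorem on the compact cube of reports. *)

Section Truthfulness.
Variable R : realType.
Local Set Implicit Arguments.
Local Unset Strict Implicit.

Lemma expR_le1D3x (x : R) : 0 <= x <= 1 -> expR x <= 1 + 3 * x.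
Proof.
move=> /andP[x0 x1].
have e2 : expR x = expR (x / 2) * expR (x / 2) by rewrite -expRD; congr expR; field.
have inv : expR (x / 2) * expR (- (x / 2)) = 1 by rewrite expRxMexpNx_1.
have lb := expR_ge1Dx (- (x / 2)).
have pos := expR_gt0 (x / 2).
have half : expR (x / 2) <= 1 + x by nra.
rewrite e2; nra.
Qed.

Lemma ratio_le_expR n (D : 'rV[R]_n -> R) (beta d : R) (P Q : 'rV[R]_n) :
  (forall x, 0 < D x) -> (forall x x', `|ln (D x / D x')| <= beta * `|x - x'|) ->
  0 <= beta -> `|P - Q| <= d -> D P <= expR (beta * d) * D Q.
Proof.
move=> Dpos logLip beta0 PQ.
have lnle : ln (D P / D Q) <= beta * d.
  by apply: le_trans (ler_norm _) _; apply: le_trans (logLip P Q) _; exact: ler_wpM2l.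
have pos : D P / D Q \in Num.pos by rewrite posrE divr_gt0.
have : D P / D Q <= expR (beta * d) by rewrite -(lnK pos) ler_expR.
by rewrite ler_pdivrMr.
Qed.

(** The elementary inequality behind the pairwise gain: if the report [z]
    exceeds the belief [p] and is moved down to [z'], still at least [x] above
    [p], the loss on the outcome 1 (weight [p], amplified by [E <= 1 + 3x]) is
    smaller than the gain on the outcome 0 (weight [1 - p]). *)
Lemma quadratic_gain (p x E z z' : R) : 0 <= p -> 0 <= x -> p + x <= z' ->
  z' < z -> z <= 1 -> E <= 1 + 3 * x -> p * E * (2 - z - z') < (1 - p) * (z + z').
Proof.
move=> p0 x0 pz' z'z z1 hE.
have w0 : 0 <= 2 - z - z' by lra.
have pw : p * (2 - z - z') <= (z + z') / 2 * (2 - z - z') by apply: ler_wpM2r; lra.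
have amgm : (z + z') / 2 * (2 - z - z') <= 1 / 2 by have := sqr_ge0 (z + z' - 1); nra.
have pw0 : 0 <= p * (2 - z - z') by nra.
have pE : p * E * (2 - z - z') <= p * (2 - z - z') * (1 + 3 * x).
  by rewrite mulrAC; apply: ler_wpM2l.
have px : x * (p * (2 - z - z')) <= x * (1 / 2) by apply: ler_wpM2l => //; lra.
nra.
Qed.

Lemma is_derive_line n (F : 'rV[R]_n -> R) (X v : 'rV[R]_n) (s : R) :
  differentiable F (X + s *: v) ->
  is_derive s 1 (fun s => F (X + s *: v)) ('D_v F (X + s *: v)).
Proof.
move=> dF.
have E : (fun h : R => h^-1 *: (((fun s => F (X + s *: v)) \o shift s) (h *: 1)
                                 - F (X + s *: v))) =
         (fun h : R => h^-1 *: ((F \o shift (X + s *: v)) (h *: v) - F (X + s *: v))).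
  apply/funext => h /=; congr (_ *: (F _ - _)).
  have -> : h%:A + s = h + s by rewrite /GRing.scale /= mulr1.
  by rewrite scalerDl addrCA.
split; first by rewrite /derivable E; exact: diff_derivable.
by rewrite /derive E.
Qed.

Lemma mvt_line n (F : 'rV[R]_n -> R) (X v : 'rV[R]_n) (a b : R) :
  (forall x, differentiable F x) -> a < b ->
  exists2 c, a < c < b &
    F (X + b *: v) - F (X + a *: v) = 'D_v F (X + c *: v) * (b - a).
Proof.
move=> dF ab.
have D s := is_derive_line (dF (X + s *: v)).
have cont : {within `[a, b], continuous (fun s => F (X + s *: v))}.
  apply: continuous_subspaceT => s; apply: differentiable_continuous.
  by apply/derivable1_diffP; have [] := D s.
have [c cab ->] := MVT ab (fun s _ => D s) cont.
by exists c; rewrite in_itv /= in cab.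
Qed.

Lemma qscoreT (z : R) : qscore z true = 1 - (1 - z) ^+ 2.
Proof. by rewrite /qscore /= mulr1n. Qed.

Lemma qscoreF (z : R) : qscore z false = 1 - z ^+ 2.
Proof. by rewrite /qscore /= mulr0n sub0r sqrrN. Qed.

Lemma qscore_compl (z : R) (b : bool) : qscore (1 - z) b = qscore z (~~ b).
Proof. by case: b; rewrite /qscore /= ?mulr1n ?mulr0n; ring. Qed.

Lemma pair_gain n (F D : 'rV[R]_n -> R) (v X1 X0 : 'rV[R]_n) (eta x E p z z' : R) :
  (forall y, differentiable F y) -> (forall y, 'D_v F y = eta * D y) ->
  (forall y, 0 < D y) ->
  (forall a b, 0 <= a <= 1 -> 0 <= b <= 1 -> D (X1 + a *: v) <= E * D (X0 + b *: v)) ->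
  0 < eta -> 0 <= x -> E <= 1 + 3 * x -> 0 <= p ->
  p + x <= z' -> z' < z -> z <= 1 ->
  p * F (X1 + qscore z true *: v) + (1 - p) * F (X0 + qscore z false *: v) <
  p * F (X1 + qscore z' true *: v) + (1 - p) * F (X0 + qscore z' false *: v).
Proof.
move=> dF dD Dpos ratio eta0 x0 hE p0 pz' z'z z1.
rewrite !qscoreT !qscoreF.
have lt1 : 1 - (1 - z') ^+ 2 < 1 - (1 - z) ^+ 2 by nra.
have lt0 : 1 - z ^+ 2 < 1 - z' ^+ 2 by nra.
have [c1 /andP[c1a c1b] mvt1] := mvt_line X1 v dF lt1.
have [c0 /andP[c0a c0b] mvt0] := mvt_line X0 v dF lt0.
rewrite dD in mvt1; rewrite dD in mvt0.
set D1 := D (X1 + c1 *: v) in mvt1; set D0 := D (X0 + c0 *: v) in mvt0.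
have D0pos : 0 < D0 := Dpos _.
have D10 : D1 <= E * D0 by apply: ratio; apply/andP; split; nra.
have quad := quadratic_gain p0 x0 pz' z'z z1 hE.
have weighted : p * D1 * (2 - z - z') < (1 - p) * D0 * (z + z').
  have l1 : p * D1 * (2 - z - z') <= p * E * (2 - z - z') * D0.
    have w0 : 0 <= p * (2 - z - z') by apply: mulr_ge0 => //; lra.
    have := ler_wpM2l w0 D10; nra.
  have l2 : p * E * (2 - z - z') * D0 < (1 - p) * (z + z') * D0 by rewrite ltr_pM2r.
  lra.
have scaled : eta * (z - z') * (p * D1 * (2 - z - z')) <
              eta * (z - z') * ((1 - p) * D0 * (z + z')).
  by rewrite ltr_pM2l // mulr_gt0 // subr_gt0.
have e1 : F (X1 + (1 - (1 - z) ^+ 2) *: v) = F (X1 + (1 - (1 - z') ^+ 2) *: v) +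
   eta * D1 * ((1 - (1 - z) ^+ 2) - (1 - (1 - z') ^+ 2)) by rewrite -mvt1; ring.
have e0 : F (X0 + (1 - z' ^+ 2) *: v) = F (X0 + (1 - z ^+ 2) *: v) +
   eta * D0 * ((1 - z' ^+ 2) - (1 - z ^+ 2)) by rewrite -mvt0; ring.
rewrite e1 e0; lra.
Qed.

(** The downward case is the upward one for the
    complemented event ([p, z, z'] replaced by [1 - p, 1 - z, 1 - z']). *)
Lemma pair_gain_towards n (F D : 'rV[R]_n -> R) (v X1 X0 : 'rV[R]_n) (eta beta p z z' : R) :
  (forall y, differentiable F y) -> (forall y, 'D_v F y = eta * D y) ->
  (forall y, 0 < D y) -> (forall y y', `|ln (D y / D y')| <= beta * `|y - y'|) ->
  (forall a b, 0 <= a <= 1 -> 0 <= b <= 1 -> `|(X1 + a *: v) - (X0 + b *: v)| <= eta) ->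
  0 < eta -> 0 < beta -> beta * eta <= 1 -> 0 <= p <= 1 ->
  (p + (beta + 1) * eta <= z' /\ z' < z /\ z <= 1) \/
  (0 <= z /\ z < z' /\ z' <= p - (beta + 1) * eta) ->
  p * F (X1 + qscore z true *: v) + (1 - p) * F (X0 + qscore z false *: v) <
  p * F (X1 + qscore z' true *: v) + (1 - p) * F (X0 + qscore z' false *: v).
Proof.
move=> dF dD Dpos logLip dist eta0 beta0 be1 /andP[p0 p1] towards.
have x0 : 0 <= beta * eta by rewrite mulr_ge0 // ltW.
have hE : expR (beta * eta) <= 1 + 3 * (beta * eta) by apply: expR_le1D3x; rewrite x0 be1.
have gap : beta * eta <= (beta + 1) * eta by rewrite mulrDl mul1r lerDl ltW.
have ratio10 a b : 0 <= a <= 1 -> 0 <= b <= 1 ->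
    D (X1 + a *: v) <= expR (beta * eta) * D (X0 + b *: v).
  by move=> ha hb; apply: ratio_le_expR => //; [exact: ltW | exact: dist].
have ratio01 a b : 0 <= a <= 1 -> 0 <= b <= 1 ->
    D (X0 + a *: v) <= expR (beta * eta) * D (X1 + b *: v).
  by move=> ha hb; apply: ratio_le_expR => //; [exact: ltW | rewrite distrC; exact: dist].
case: towards => [[pz' [z'z z1]] | [z0 [zz' z'p]]].
  by apply: (pair_gain dF dD Dpos ratio10 eta0 x0 hE p0) => //; lra.
have q0 : 0 <= 1 - p by lra.
have qz' : 1 - p + beta * eta <= 1 - z' by lra.
have z'z : 1 - z' < 1 - z by lra.
have z1 : 1 - z <= 1 by lra.
have := pair_gain (X1 := X0) (X0 := X1) dF dD Dpos ratio01 eta0 x0 hE q0 qz' z'z z1.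
rewrite !qscore_compl /=; lra.
Qed.

Definition flip m (t : 'I_m) (y : outcome m) : outcome m :=
  [ffun t' => if t' == t then ~~ y t' else y t'].

Lemma flipK m (t : 'I_m) : involutive (flip t).
Proof. by move=> y; apply/ffunP => t'; rewrite !ffunE; case: eqP => // _; exact: negbK. Qed.

Lemma flip_t m (t : 'I_m) (y : outcome m) : flip t y t = ~~ y t.
Proof. by rewrite ffunE eqxx. Qed.

Lemma flip_nt m (t t' : 'I_m) (y : outcome m) : t' != t -> flip t y t' = y t'.
Proof. by rewrite ffunE => /negbTE ->. Qed.

Lemma sum_outcome_pairs m (t : 'I_m) (f : outcome m -> R) :
  \sum_(y : outcome m) f y = \sum_(y : outcome m | y t) (f y + f (flip t y)).
Proof.
rewrite (bigID (fun y : outcome m => y t)) /= big_split /=; congr (_ + _).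
rewrite (reindex_inj (inv_inj (flipK t))) /=.
by apply: eq_bigl => y; rewrite flip_t negbK.
Qed.

Definition prob_others m (p : 'rV[R]_m) (t : 'I_m) (y : outcome m) : R :=
  \prod_(t' | t' != t) (if y t' then p ord0 t' else 1 - p ord0 t').

Lemma outcome_prob_split m (p : 'rV[R]_m) (t : 'I_m) (y : outcome m) :
  outcome_prob p y = (if y t then p ord0 t else 1 - p ord0 t) * prob_others p t y.
Proof. by rewrite /outcome_prob (bigD1 t). Qed.

Lemma prob_others_flip m (p : 'rV[R]_m) (t : 'I_m) (y : outcome m) :
  prob_others p t (flip t y) = prob_others p t y.
Proof. by apply: eq_bigr => t' t't; rewrite flip_nt. Qed.

Lemma prob_others_ge0 m (p : 'rV[R]_m) (t : 'I_m) (y : outcome m) :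
  in_unit_cube p -> 0 <= prob_others p t y.
Proof.
move=> hp; apply: prodr_ge0 => t' _.
by have /andP[p0 p1] := hp ord0 t'; case: (y t') => //; rewrite subr_ge0.
Qed.

Lemma expect_pairs m (p : 'rV[R]_m) (t : 'I_m) (f : outcome m -> R) :
  \sum_(y : outcome m) outcome_prob p y * f y =
  \sum_(y : outcome m | y t) prob_others p t y *
                             (p ord0 t * f y + (1 - p ord0 t) * f (flip t y)).
Proof.
rewrite (sum_outcome_pairs t); apply: eq_bigr => y yt.
by rewrite !(outcome_prob_split p t) prob_others_flip flip_t yt /=; ring.
Qed.

Lemma outcome_prob_sum1 m (p : 'rV[R]_m) : \sum_(y : outcome m) outcome_prob p y = 1.
Proof.
rewrite /outcome_prob -(bigA_distr_bigA (fun t b => if b then p ord0 t else 1 - p ord0 t)).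
by rewrite big1 // => t _; rewrite big_bool /= addrC subrK.
Qed.

Lemma prob_others_sum1 m (p : 'rV[R]_m) (t : 'I_m) :
  \sum_(y : outcome m | y t) prob_others p t y = 1.
Proof.
rewrite -[RHS](outcome_prob_sum1 p).
under [RHS]eq_bigr do rewrite -[outcome_prob p _]mulr1.
by rewrite (expect_pairs p t (fun=> 1)); apply: eq_bigr => y _; ring.
Qed.

Lemma weighted_sum_lt (I : finType) (P : pred I) (w f g : I -> R) :
  (forall y, P y -> 0 <= w y) -> 0 < \sum_(y | P y) w y ->
  (forall y, P y -> f y < g y) ->
  \sum_(y | P y) w y * f y < \sum_(y | P y) w y * g y.
Proof.
move=> w0 wpos fg.
have [y0 /andP[Py0 wy0]] := psumr_neq0P w0 (elimN eqP (lt0r_neq0 wpos)).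
rewrite (bigD1 y0) //= [X in _ < X](bigD1 y0) //=.
apply: ltr_leD; first by rewrite ltr_pM2l // fg.
by apply: ler_sum => y /andP[Py _]; rewrite ler_wpM2l ?w0 // ltW ?fg.
Qed.

Lemma rV_norm_le n (x : 'rV[R]_n) (d : R) :
  0 <= d -> (forall j, `|x ord0 j| <= d) -> `|x| <= d.
Proof.
move=> d0 hx; rewrite [`|x|]mx_normrE; apply: bigmax_le => // ij _.
by rewrite (ord1 ij.1); exact: hx.
Qed.

Definition set_entry m (r : 'rV[R]_m) (t : 'I_m) (z : R) : 'rV[R]_m :=
  \row_t' (if t' == t then z else r ord0 t').

Lemma set_entry_id m (r : 'rV[R]_m) (t : 'I_m) : set_entry r t (r ord0 t) = r.
Proof. by apply/rowP => t'; rewrite mxE; case: eqP => // ->. Qed.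

Lemma set_entry_cube m (r : 'rV[R]_m) (t : 'I_m) (z : R) :
  in_unit_cube r -> 0 <= z <= 1 -> in_unit_cube (set_entry r t z).
Proof. by move=> hr hz j t'; rewrite (ord1 j) mxE; case: eqP => // _; exact: hr. Qed.

Definition scores n m (Rep : 'M[R]_(n, m)) (y : outcome m) : 'rV[R]_n :=
  \row_k \sum_t qscore (Rep k t) (y t).

Definition scores_but n m (i : 'I_n) (Rep : 'M[R]_(n, m)) (t : 'I_m) (y : outcome m) :
  'rV[R]_n :=
  \row_k \sum_t' (if (k == i) && (t' == t) then 0 else qscore (Rep k t') (y t')).

Lemma scores_set_entry n m (i : 'I_n) (r : 'rV[R]_m) (Rep : 'M[R]_(n, m)) t z (y : outcome m) :
  scores (replace_row i (set_entry r t z) Rep) y =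
  scores_but i (replace_row i r Rep) t y + qscore z (y t) *: delta_mx ord0 i.
Proof.
apply/rowP => k; rewrite !mxE eqxx /=.
case: (eqVneq k i) => [->|ki]; last first.
  by rewrite mulr0 addr0; apply: eq_bigr => t' _; rewrite !mxE (negbTE ki).
rewrite mulr1 (bigD1 t) //= [X in _ = X + _](bigD1 t) //= !mxE !eqxx add0r addrC.
by congr (_ + _); apply: eq_bigr => t' t't; rewrite !mxE eqxx (negbTE t't).
Qed.

(** For the two outcomes [y] and [flip t y], the score-shifted points differ by
    at most [eta] in sup-norm: only the other forecasters' scores on event [t]
    and forecaster [i]'s own shift differ, each by at most 1. *)
Lemma scores_but_flip_dist n m (eta a b : R) (i : 'I_n) (Q : 'M[R]_(n, m)) t (y : outcome m) :
  0 < eta -> (forall k, k != i -> 0 <= Q k t <= 1) -> y t ->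
  0 <= a <= 1 -> 0 <= b <= 1 ->
  `|(eta *: scores_but i Q t y + a *: (eta *: delta_mx ord0 i)) -
    (eta *: scores_but i Q t (flip t y) + b *: (eta *: delta_mx ord0 i))| <= eta.
Proof.
move=> eta0 hQ yt /andP[a0 a1] /andP[b0 b1].
apply: rV_norm_le => [|k]; first exact: ltW.
rewrite !mxE eqxx /=.
have same k' t' : t' != t -> qscore (Q k' t') (flip t y t') = qscore (Q k' t') (y t').
  by move=> t't; rewrite flip_nt.
case: (eqVneq k i) => [->|ki].
  have -> : \sum_t' (if t' == t then 0 else qscore (Q i t') (flip t y t')) =
            \sum_t' (if t' == t then 0 else qscore (Q i t') (y t')).
    by apply: eq_bigr => t' _; case: eqP => // /eqP /same.
  set S := \sum_t' _; rewrite !mulr1.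
  have -> : eta * S + a * eta - (eta * S + b * eta) = eta * (a - b) by ring.
  by rewrite normrM gtr0_norm // ger_pMr // ler_norml; apply/andP; split; lra.
rewrite /= mulr0n !mulr0 !addr0 (bigD1 t) //= [X in _ - _ * X](bigD1 t) //=.
rewrite flip_t yt (eq_bigr _ (same k)) qscoreT qscoreF.
set S := \sum_(t' | _) _; have /andP[q0 q1] := hQ k ki.
have -> : eta * (1 - (1 - Q k t) ^+ 2 + S) - eta * (1 - Q k t ^+ 2 + S) =
          eta * (2 * Q k t - 1) by ring.
by rewrite normrM gtr0_norm // ger_pMr // ler_norml; apply/andP; split; lra.
Qed.

Lemma win_probE n m (C : 'rV[R]_n -> R) (eta : R) (Rep : 'M[R]_(n, m)) p i :
  expected_mech (ftrl C eta) Rep p ord0 i =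
  \sum_(y : outcome m) outcome_prob p y * partial i C (eta *: scores Rep y).
Proof. by rewrite /expected_mech summxE; apply: eq_bigr => y _; rewrite !mxE. Qed.

(** Against any profile, pair the outcomes on event [t]; on each pair the
    FTRL argument only moves along [eta * e_i], so [pair_gain_towards] applies
    with [D = d2 i C]. *)
Lemma dominated_by_move n m (C : 'rV[R]_n -> R) (eta beta : R) (i : 'I_n)
    (p r : 'rV[R]_m) (t : 'I_m) (z' : R) :
  (forall x, differentiable (partial i C) x) -> (forall x, 0 < d2 i C x) ->
  (forall x x', `|ln (d2 i C x / d2 i C x')| <= beta * `|x - x'|) ->
  0 < eta -> 0 < beta -> beta * eta <= 1 -> in_unit_cube p ->
  (p ord0 t + (beta + 1) * eta <= z' /\ z' < r ord0 t /\ r ord0 t <= 1) \/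
  (0 <= r ord0 t /\ r ord0 t < z' /\ z' <= p ord0 t - (beta + 1) * eta) ->
  strictly_dominates (ftrl C eta) i p (set_entry r t z') r.
Proof.
move=> dF Dpos logLip eta0 beta0 be1 hp towards Rep hRep.
pose v := eta *: delta_mx ord0 i : 'rV[R]_n.
pose X y := eta *: scores_but i (replace_row i r Rep) t y.
have win z : expected_mech (ftrl C eta) (replace_row i (set_entry r t z) Rep) p ord0 i =
    \sum_(y : outcome m) outcome_prob p y * partial i C (X y + qscore z (y t) *: v).
  rewrite win_probE; apply: eq_bigr => y _.
  by rewrite scores_set_entry scalerDr !scalerA [eta * _]mulrC.
have dD x : 'D_v (partial i C) x = eta * d2 i C x by rewrite /d2 /partial !deriveE // linearZ.
rewrite -{1}(set_entry_id r t) !win !(expect_pairs p t).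
apply: weighted_sum_lt => [y _||y yt].
- exact: prob_others_ge0.
- by rewrite prob_others_sum1 ltr01.
rewrite flip_t yt /=.
apply: (pair_gain_towards dF dD Dpos logLip _ eta0 beta0 be1 (hp ord0 t) towards).
move=> a b ha hb; apply: scores_but_flip_dist => // k ki.
by rewrite mxE (negbTE ki); exact: hRep.
Qed.

Lemma undominated_near_belief n m (C : 'rV[R]_n -> R) (eta beta : R) (i : 'I_n)
    (p r : 'rV[R]_m) :
  (forall x, differentiable (partial i C) x) -> (forall x, 0 < d2 i C x) ->
  (forall x x', `|ln (d2 i C x / d2 i C x')| <= beta * `|x - x'|) ->
  0 < eta -> 0 < beta -> beta * eta <= 1 -> in_unit_cube p ->
  undominated (ftrl C eta) i p r -> `|r - p| <= (beta + 1) * eta.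
Proof.
move=> dF Dpos logLip eta0 beta0 be1 hp [hr undom].
have g0 : 0 < (beta + 1) * eta by rewrite mulr_gt0 ?addr_gt0.
apply: rV_norm_le => [|t]; first exact: ltW.
rewrite !mxE leNgt; apply/negP => far; apply: undom.
have /andP[p0 p1] := hp ord0 t; have /andP[r0 r1] := hr ord0 t.
have [z' z'01 towards] : exists2 z', 0 <= z' <= 1 &
    (p ord0 t + (beta + 1) * eta <= z' /\ z' < r ord0 t /\ r ord0 t <= 1) \/
    (0 <= r ord0 t /\ r ord0 t < z' /\ z' <= p ord0 t - (beta + 1) * eta).
  move: far; rewrite ltr_normr => /orP[] far.
  - exists (p ord0 t + (beta + 1) * eta); first by apply/andP; split; lra.
    by left; split; [|split]; lra.
  - exists (p ord0 t - (beta + 1) * eta); first by apply/andP; split; lra.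
    by right; split; [|split]; lra.
exists (set_entry r t z'); split; first exact: set_entry_cube.
exact: dominated_by_move towards.
Qed.

Lemma differentiable_bigsum (V W : normedModType R) (I : finType) (P : pred I)
    (f : I -> V -> W) (x : V) :
  (forall j, differentiable (f j) x) -> differentiable (fun v => \sum_(j | P j) f j v) x.
Proof.
by move=> df; rewrite -fct_sumE; elim/big_ind: _ => // g h; exact: differentiableD.
Qed.

Lemma differentiable_qscore (V : normedModType R) (h : V -> R) (b : bool) (x : V) :
  differentiable h x -> differentiable (fun v => qscore (h v) b) x.
Proof.
move=> dh; rewrite /qscore.
apply: differentiableB; first exact: differentiable_cst.
have db : differentiable (cst (b%:R : R) - h) x.
  by apply: differentiableB => //; exact: differentiable_cst.
exact: differentiableM.
Qed.

Lemma differentiable_scores n m (i : 'I_n) (Rep : 'M[R]_(n, m)) (y : outcome m)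
    (x : 'rV[R]_m) :
  differentiable (fun r => scores (replace_row i r Rep) y) x.
Proof.
have -> : (fun r => scores (replace_row i r Rep) y) = (fun r =>
    \sum_k (\sum_t qscore (replace_row i r Rep k t) (y t)) *: delta_mx ord0 k).
  by apply/funext => r; rewrite [LHS]row_sum_delta; apply: eq_bigr => k _; rewrite mxE.
apply: differentiable_bigsum => k; apply: differentiableZl.
apply: differentiable_bigsum => t; apply: differentiable_qscore.
case: (eqVneq k i) => [->|ki].
  have -> : (fun r : 'rV[R]_m => replace_row i r Rep i t) = (fun r => r ord0 t).
    by apply/funext => r; rewrite mxE eqxx.
  exact: differentiable_coord.
have -> : (fun r : 'rV[R]_m => replace_row i r Rep k t) = cst (Rep k t).
  by apply/funext => r; rewrite mxE (negbTE ki).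
exact: differentiable_cst.
Qed.

(** Undominated reports exist: against the all-zero profile the winning
    probability is continuous on the compact cube of reports, so it has a
    maximiser, which no report can strictly dominate. *)
Lemma exists_undominated n m (C : 'rV[R]_n -> R) (eta : R) (i : 'I_n) (p : 'rV[R]_m) :
  (forall x, differentiable (partial i C) x) -> exists r, undominated (ftrl C eta) i p r.
Proof.
move=> dF.
pose win r := expected_mech (ftrl C eta) (replace_row i r 0) p ord0 i.
pose cube := [set r : 'rV[R]_m | in_unit_cube r].
have cube0 k : in_unit_cube (0 : 'M[R]_(k, m)) by move=> j t; rewrite mxE lexx ler01.
have cube_compact : compact cube.
  have -> : cube = [set r : 'rV[R]_m | forall t, `[0, 1]%classic (r ord0 t)].
    apply/seteqP; split => r /= hr.
    - by move=> t; have := hr ord0 t; rewrite /= in_itv.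
    - by move=> j t; rewrite (ord1 j); have := hr t; rewrite /= in_itv.
  by apply: (@rV_compact R m (fun=> `[0, 1]%classic)) => t; exact: segment_compact.
have win_cont : {within cube, continuous win}.
  apply: continuous_subspaceT => r; apply: differentiable_continuous.
  rewrite (_ : win = fun r => \sum_(y : outcome m) outcome_prob p y *
                      partial i C (eta *: scores (replace_row i r 0) y)).
    apply: differentiable_bigsum => y; apply: differentiableM.
      exact: differentiable_cst.
    apply: (differentiable_comp (g := partial i C)) => //.
    exact/differentiableZ/differentiable_scores.
  by apply/funext => r'; rewrite /win win_probE.
have [c cube_c c_max] := compact_EVT_max (ex_intro _ _ (cube0 1 : cube 0)) cube_compact win_cont.
exists c; split; first by rewrite inE in cube_c.
move=> [rhat [cube_rhat rhat_dom]].
have := rhat_dom 0 (cube0 n); rewrite ltNge.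
by move/negP; apply; exact: c_max (mem_set cube_rhat).
Qed.

End Truthfulness.

(** Main theorem (only [beta * eta <= 1] is needed from the bound on [eta]). *)
Theorem mainTheorem7 (R : realType) (n m : nat) (Rg : 'rV[R]_n -> R)
  (alpha beta eta : R) :
  0 < alpha -> 0 < beta ->
  regularizer Rg -> condition1 (conjugate Rg) alpha beta ->
  0 < eta -> eta < Num.min (alpha / 2) (1 / beta) ->
  approx_truthful (ftrl (m := m) (conjugate Rg) eta) ((beta + 1) * eta).
Proof.
move=> _ beta0 _ [[_ dC _] _ d2_pos logLip] eta0 eta_lt.
have be1 : beta * eta <= 1.
  move: eta_lt; rewrite lt_min => /andP[_ eta_lt].
  have : beta * eta < beta * (1 / beta) by rewrite ltr_pM2l.
  by rewrite mul1r mulfV ?gt_eqF // => /ltW.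
move=> i p hp; split; first exact: exists_undominated.
move=> r.
exact: undominated_near_belief (dC i) (d2_pos^~ i) (fun x x' => logLip x x' i) eta0 beta0 be1 hp.
Qed.
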